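(* Let $\mathcal{R}=(G_0,e\to R)$ be an expanding replacement system with finite branching whose replacement graph $R$ is connected. Then there exists $i\in\mathbb{N}$ such that for every graph $G\in\Gamma(\mathcal{R})$, each collapsible subgraph of $G$ has an edge in common with at most $i$ other collapsible subgraphs of $G$.
   Context: A graph is a finite directed multigraph (loops, multiple edges allowed); isomorphisms preserve directions. A replacement system $\mathcal{R}=(G_0,e\to R)$: $G_0$ a graph, $e$ a non-loop edge from $v$ to $w$, $R$ a graph containing $v,w$ (initial and terminal vertices; others interior). Replacing an edge $\varepsilon$ of a graph means deleting it and gluing in a copy of $R$ identifying initial/terminal vertices with those of $\varepsilon$. An expansion of a graph is obtained by finitely many replacements; the full expansion sequence $G_n$ replaces all edges of $G_{n-1}$. $\mathcal{R}$ is expanding if $G_0,R$ have no isolated vertices, the initial and terminal vertices of $R$ are not adjacent, and $R$ has $\ge3$ vertices and $\ge2$ edges. $\mathcal{R}$ has finite branching if there is a uniform bound on the degrees of vertices of all $G_n$. The graph family $\Gamma(\mathcal{R})$ is the set of finite directed graphs $G$ having some expansion isomorphic to some expansion of $G_0$. Let $R_{\mathrm{loop}}$ be $R$ with initial and terminal vertices identified. A characteristic map for $R$ in $G$ is an isomorphism $\chi\colon R\to S$ or $\chi\colon R_{\mathrm{loop}}\to S$ onto a subgraph $S$ of $G$ such that for every interior vertex $u$ of $R$, every edge of $G$ incident on $\chi(u)$ lies in $S$; a collapsible subgraph of $G$ is the image of a characteristic map. *)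

From HB Require Import structures.
From mathcomp Require Import all_boot.

Set Implicit Arguments.
Unset Strict Implicit.
Unset Printing Implicit Defensive.

Record graph := Graph {
  gV : finType;
  gE : finType;
  gsrc : gE -> gV;
  gtgt : gE -> gV }.

Definition isomorphic (G H : graph) : Prop :=
  exists (fv : gV G -> gV H) (fe : gE G -> gE H),
    [/\ bijective fv, bijective fe,
        forall e, gsrc (fe e) = fv (gsrc e) &
        forall e, gtgt (fe e) = fv (gtgt e)].

Definition incident (G : graph) (f : gE G) (v : gV G) : Prop :=
  gsrc f = v \/ gtgt f = v.

Definition no_isolated_vertices (G : graph) : Prop :=
  forall v : gV G, exists f : gE G, incident f v.

(* number of edge-ends at v (loops count twice) *)
Definition degree (G : graph) (v : gV G) : nat :=
  #|[set f : gE G | gsrc f == v]| + #|[set f : gE G | gtgt f == v]|.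

Definition adjacent (G : graph) : rel (gV G) :=
  fun x y => [exists f : gE G, ((gsrc f == x) && (gtgt f == y))
                               || ((gsrc f == y) && (gtgt f == x))].

Definition connected_graph (G : graph) : Prop :=
  forall x y : gV G, connect (@adjacent G) x y.

(* A replacement system (G0, e -> R) with a single edge label: the base
   graph G0, the replacement graph R and the initial / terminal vertices of
   R (which are glued to the initial / terminal vertices of the replaced
   edge; e is a non-loop edge, so they are required to be distinct). *)
Record repl_system := ReplSystem {
  rs_G0 : graph;
  rs_R : graph;
  rs_init : gV rs_R;
  rs_term : gV rs_R }.

Section Replacement.
Variable RS : repl_system.
Local Notation R := (rs_R RS).
Local Notation iR := (rs_init RS).
Local Notation tR := (rs_term RS).

Definition interiorb (x : gV R) : bool := (x != iR) && (x != tR).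

Definition interior_vertex : finType := {x : gV R | interiorb x}.

Section Single.
Variables (G : graph) (eps : gE G).

Definition rep_V : finType := (gV G + interior_vertex)%type.
Definition rep_E : finType := ({f : gE G | f != eps} + gE R)%type.

Definition rep_vmap (x : gV R) : rep_V :=
  match insub x with
  | Some s => inr s
  | None => if x == iR then inl (gsrc eps) else inl (gtgt eps)
  end.

Definition rep_src (f : rep_E) : rep_V :=
  match f with
  | inl g => inl (gsrc (val g))
  | inr r => rep_vmap (gsrc r)
  end.

Definition rep_tgt (f : rep_E) : rep_V :=
  match f with
  | inl g => inl (gtgt (val g))
  | inr r => rep_vmap (gtgt r)
  end.

Definition replace_edge : graph := @Graph rep_V rep_E rep_src rep_tgt.
End Single.

Inductive expansion (G : graph) : graph -> Prop :=
  | exp_refl : expansion G G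
  | exp_step (H : graph) (eps : gE H) :
      expansion G H -> expansion G (replace_edge eps).

Section Full.
Variable G : graph.

Definition full_V : finType := (gV G + (gE G * interior_vertex))%type.
Definition full_E : finType := (gE G * gE R)%type.

Definition full_vmap (eps : gE G) (x : gV R) : full_V :=
  match insub x with
  | Some s => inr (eps, s)
  | None => if x == iR then inl (gsrc eps) else inl (gtgt eps)
  end.

Definition full_src (f : full_E) : full_V := full_vmap f.1 (gsrc f.2).
Definition full_tgt (f : full_E) : full_V := full_vmap f.1 (gtgt f.2).

Definition full_step : graph := @Graph full_V full_E full_src full_tgt.
End Full.

Fixpoint full_expansion (n : nat) : graph :=
  match n with
  | 0 => rs_G0 RS
  | n'.+1 => full_step (full_expansion n')
  end.

Definition expanding : Prop :=
  [/\ no_isolated_vertices (rs_G0 RS), no_isolated_vertices R,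
      ~ (exists f : gE R, (gsrc f = iR /\ gtgt f = tR) \/
                          (gsrc f = tR /\ gtgt f = iR)),
      3 <= #|gV R| & 2 <= #|gE R| ].

Definition finite_branching : Prop :=
  exists d : nat, forall n (v : gV (full_expansion n)), degree v <= d.

Definition in_family (G : graph) : Prop :=
  exists G' H, [/\ expansion G G', expansion (rs_G0 RS) H & isomorphic G' H].

(* R_loop: R with its initial and terminal vertices identified; the
   identified vertex is None. *)
Definition rloop_V : finType := option interior_vertex.
Definition rloop_vmap (x : gV R) : rloop_V := insub x.
Definition R_loop : graph :=
  @Graph rloop_V (gE R) (fun f => rloop_vmap (gsrc f))
                        (fun f => rloop_vmap (gtgt f)).

Definition subgraph (G : graph) : finType :=
  ({set gV G} * {set gE G})%type.

Definition iso_onto_subgraph (H G : graph) (fv : gV H -> gV G)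
    (fe : gE H -> gE G) (S : subgraph G) : Prop :=
  [/\ injective fv, injective fe,
      (forall e, gsrc (fe e) = fv (gsrc e)),
      (forall e, gtgt (fe e) = fv (gtgt e)) &
      S = ([set fv x | x : gV H], [set fe x | x : gE H])].

Definition char_map_R (G : graph) (fv : gV R -> gV G) (fe : gE R -> gE G)
    (S : subgraph G) : Prop :=
  iso_onto_subgraph fv fe S /\
  forall u : gV R, interiorb u ->
    forall f : gE G, incident f (fv u) -> f \in S.2.

Definition char_map_Rloop (G : graph) (fv : gV R_loop -> gV G)
    (fe : gE R_loop -> gE G) (S : subgraph G) : Prop :=
  iso_onto_subgraph fv fe S /\
  forall u : gV R, interiorb u ->
    forall f : gE G, incident f (fv (rloop_vmap u)) -> f \in S.2.

Definition collapsible (G : graph) (S : subgraph G) : Prop :=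
  (exists fv fe, @char_map_R G fv fe S) \/
  (exists fv fe, @char_map_Rloop G fv fe S).

End Replacement.

From HB Require Import structures.
From mathcomp Require Import all_boot zify.

Set Implicit Arguments.
Unset Strict Implicit.
Unset Printing Implicit Defensive.

(* A vertex that already exists keeps its identity under every later
   replacement.  After one full expansion step a vertex with out/in-degrees
   (o, i) has degrees (o oi + i ot, o ii + i it), where (oi, ii) and (ot, it)
   are the degrees of the initial and terminal vertices of R.  Finite
   branching bounds these iterates, so they stabilise and provide positive
   weights (ps, pt) with ps = oi ps + ii pt and pt = ot ps + it pt.  The
   potential o ps + i pt of an old vertex is then invariant under any single
   replacement, a new vertex inherits the potential of a vertex of R, and
   isomorphisms preserve potentials: every graph of the family has degrees
   bounded by a uniform D.  A collapsible subgraph is the image of the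
   connected graph R, so one sharing an edge with S lies within |V(R)| steps
   of the edges of S, a set of at most |E(R)| (2D)^|V(R)| edges; since a
   collapsible subgraph is determined by its edge set, there are at most
   2^(|E(R)| (2D)^|V(R)|) of them. *)

Lemma card_set_sum (T : finType) (P : pred T) : #|[set x | P x]| = \sum_x P x.
Proof. by rewrite -sum1dep_card big_mkcond /=; apply: eq_bigr => x _; case: (P x). Qed.

Lemma sum_sig_neq (T : finType) (a : T) (F : T -> nat) :
  \sum_(g : {g : T | g != a}) F (val g) + F a = \sum_g F g.
Proof.
rewrite [RHS](bigD1 a) //= addnC; congr (_ + _).
rewrite (reindex_omap (val : {g : T | g != a} -> T) insub); last first.
  by move=> i Pi; rewrite insubT.
by apply: eq_bigl => -[i iA] /=; rewrite insubT ?iA /=; apply/esym/eqP.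
Qed.

Lemma card_bigcup_le (T I : finType) (Y : {set I}) (F : I -> {set T}) :
  #|\bigcup_(h in Y) F h| <= \sum_(h in Y) #|F h|.
Proof.
elim/big_rec2: _ => [|h A n _ IH]; first by rewrite cards0.
exact: leq_trans (leq_card_setU _ _) (leq_add _ IH).
Qed.

Section EndDegrees.
Variable G : graph.

Definition endpt (b : bool) : gE G -> gV G := if b then @gsrc G else @gtgt G.
Definition enddeg (b : bool) (v : gV G) : nat := #|[set f | endpt b f == v]|.

Lemma enddegE b v : enddeg b v = \sum_f (endpt b f == v : nat).
Proof. exact: card_set_sum. Qed.

Lemma enddeg_gt0 b f : 0 < enddeg b (endpt b f).
Proof. by apply/card_gt0P; exists f; rewrite inE. Qed.

Lemma degreeE (v : gV G) : degree v = enddeg true v + enddeg false v.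
Proof. by []. Qed.

Lemma incident_degree_gt0 (v : gV G) : (exists f, incident f v) -> 0 < degree v.
Proof.
case=> f [<- | <-]; rewrite degreeE.
  exact: leq_trans (enddeg_gt0 true f) (leq_addr _ _).
exact: leq_trans (enddeg_gt0 false f) (leq_addl _ _).
Qed.

End EndDegrees.

Notation outdeg := (enddeg true).
Notation indeg := (enddeg false).

Lemma isomorphic_enddeg (G H : graph) : isomorphic G H ->
  forall v : gV G, exists w : gV H, forall b, enddeg b w = enddeg b v.
Proof.
move=> [fv [fe [fv_bij [ge feK geK] src_fe tgt_fe]]] v; exists (fv v) => b.
have endpt_fe e : endpt b (fe e) = fv (endpt b e) by case: b; [apply: src_fe | apply: tgt_fe].
rewrite /enddeg -[RHS](card_imset _ (can_inj feK)) (can2_imset_pre _ feK geK).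
apply: eq_card => h; rewrite !inE -{1}(geK h) endpt_fe.
by rewrite (inj_eq (bij_inj fv_bij)).
Qed.

Section Replacement.
Variable RS : repl_system.
Local Notation R := (rs_R RS).
Local Notation iR := (rs_init RS).
Local Notation tR := (rs_term RS).
Hypothesis init_neq_term : iR != tR.

(* [rep_vmap eps] and [full_vmap eps] are convertible to instances of
   [glue_map]. *)
Definition glue_map (A B : Type) (k : interior_vertex RS -> B) (a t : A)
    (x : gV R) : A + B :=
  match insub x with
  | Some s => inr (k s)
  | None => if x == iR then inl a else inl t
  end.

Lemma glue_map_eq_inl (A B : eqType) (k : interior_vertex RS -> B) (a t v : A) x :
  (glue_map k a t x == inl v : nat) = (x == iR) * (a == v) + (x == tR) * (t == v).
Proof.
rewrite /glue_map; case: insubP => [s x_int _ | x_bdry] /=.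
  by move: x_int; rewrite /interiorb => /andP[/negbTE -> /negbTE ->].
case: ifP => [/eqP -> | x_neq_i]; first by rewrite (negbTE init_neq_term) mul1n addn0.
by move: x_bdry; rewrite /interiorb x_neq_i negbK => /eqP ->; rewrite eqxx mul1n.
Qed.

Lemma endpt_replace G (eps : gE G) b (f : gE (replace_edge RS eps)) :
  endpt b f = match f with
              | inl g => inl (endpt b (val g))
              | inr r => rep_vmap eps (endpt b r)
              end.
Proof. by case: b. Qed.

Lemma endpt_full G b (f : gE (full_step RS G)) :
  endpt b f = full_vmap f.1 (endpt b f.2).
Proof. by case: b. Qed.

Lemma enddeg_replace_old G (eps : gE G) b v :
  @enddeg (replace_edge RS eps) b (inl v) + (endpt b eps == v)
  = enddeg b v + (gsrc eps == v) * enddeg b iR + (gtgt eps == v) * enddeg b tR.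
Proof.
have new_edges : \sum_(r : gE R) (rep_vmap eps (endpt b r) == inl v : nat)
    = (gsrc eps == v) * enddeg b iR + (gtgt eps == v) * enddeg b tR.
  rewrite !enddegE !big_distrr -big_split; apply: eq_bigr => r _ /=.
  rewrite (glue_map_eq_inl id); lia.
rewrite (@enddegE (replace_edge RS eps)) (enddegE b v) big_sumType /=.
under eq_bigr do rewrite endpt_replace (inj_eq inl_inj).
under [X in _ + X + _]eq_bigr do rewrite endpt_replace.
rewrite new_edges -(sum_sig_neq eps (fun g => endpt b g == v : nat)) -!addnA.
by congr (_ + _); lia.
Qed.

Lemma enddeg_replace_new G (eps : gE G) b u :
  @enddeg (replace_edge RS eps) b (inr u) = enddeg b (val u).
Proof.
rewrite !enddegE big_sumType /= big1 ?add0n => [|g _]; last by rewrite endpt_replace.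
apply: eq_bigr => r _; rewrite endpt_replace /rep_vmap.
case: insubP => [s _ <- | x_bdry] /=; first by rewrite val_eqE.
suff -> : (endpt b r == val u) = false by case: ifP.
by apply/negbTE; apply: contra x_bdry => /eqP ->; exact: valP.
Qed.

Lemma enddeg_full_old G b v :
  @enddeg (full_step RS G) b (inl v) = outdeg v * enddeg b iR + indeg v * enddeg b tR.
Proof.
rewrite (@enddegE (full_step RS G)) (enddegE true v) (enddegE false v).
under eq_bigr do rewrite endpt_full.
rewrite -(pair_bigA _ (fun g r => (full_vmap g (endpt b r) == inl v : nat))).
rewrite !big_distrl -big_split; apply: eq_bigr => g _ /=.
rewrite !enddegE !big_distrr -big_split; apply: eq_bigr => r _ /=.
rewrite (glue_map_eq_inl (pair g)); lia.
Qed.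

End Replacement.

Lemma expansion_inhabited RS G G' : expansion RS G G' -> gV G -> inhabited (gV G').
Proof.
elim=> [|H eps _ IH] v; first by constructor.
by case: (IH v) => w; constructor; exact: inl w.
Qed.

Lemma expansion_edgeless RS G H : (gE G -> False) -> expansion RS G H -> H = G.
Proof. by move=> edgeless; elim=> [//|H' eps _ IH]; case: edgeless; rewrite -IH. Qed.

Section Potential.
Variable RS : repl_system.
Local Notation R := (rs_R RS).
Local Notation iR := (rs_init RS).
Local Notation tR := (rs_term RS).
Hypothesis init_neq_term : iR != tR.
Variables ps pt : nat.
Hypothesis fixed_init : ps = outdeg iR * ps + indeg iR * pt.
Hypothesis fixed_term : pt = outdeg tR * ps + indeg tR * pt.

Definition potential (G : graph) (v : gV G) : nat := outdeg v * ps + indeg v * pt.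

Lemma potential_replace_old G (eps : gE G) v :
  @potential (replace_edge RS eps) (inl v) = potential v.
Proof.
have := enddeg_replace_old init_neq_term eps true v.
have := enddeg_replace_old init_neq_term eps false v.
rewrite /potential /endpt.
by case: (gsrc eps == v) (gtgt eps == v) => [] [] /=; nia.
Qed.

Lemma potential_replace_new G (eps : gE G) u :
  @potential (replace_edge RS eps) (inr u) = potential (val u).
Proof. by rewrite /potential !enddeg_replace_new. Qed.

Lemma potential_expansion_old G G' : expansion RS G G' ->
  forall v : gV G, exists v' : gV G', potential v' = potential v.
Proof.
elim=> [|H eps _ IH] v; first by exists v.
by have [v' pot_v'] := IH v; exists (inl v'); rewrite potential_replace_old.
Qed.

Lemma potential_expansion_le G H : expansion RS G H ->
  forall v : gV H, potential v <= \sum_(w : gV G) potential w + \sum_(x : gV R) potential x.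
Proof.
elim=> [|H' eps _ IH] v.
  by rewrite (bigD1 v) //= -addnA leq_addr.
case: v => [w | u]; first by rewrite potential_replace_old; apply: IH.
by rewrite potential_replace_new (bigD1 (val u)) //= addnCA leq_addr.
Qed.

Lemma isomorphic_potential G H : isomorphic G H ->
  forall v : gV G, exists w : gV H, potential w = potential v.
Proof.
move=> /isomorphic_enddeg iso v; have [w deg_w] := iso v.
by exists w; rewrite /potential !deg_w.
Qed.

Lemma family_potential_le G : in_family RS G -> forall v : gV G,
  potential v <= \sum_(w : gV (rs_G0 RS)) potential w + \sum_(x : gV R) potential x.
Proof.
case=> G' [H [GG' G0H iso]] v.
have [v' <-] := potential_expansion_old GG' v.
have [w <-] := isomorphic_potential iso v'.
exact: potential_expansion_le.
Qed.

End Potential.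

Lemma nondecreasing_bounded_stationary (u : nat -> nat) B :
  (forall n, u n <= u n.+1) -> (forall n, u n <= B) -> exists n, u n.+1 = u n.
Proof.
move=> u_incr u_le_B.
suff [[n stat_n] | grows] : (exists n, u n.+1 = u n) \/ B.+1 <= u B.+1
  by [exists n | have := u_le_B B.+1; lia].
elim: B.+1 => [|k [stat | IH]]; [by right | by left |].
have := u_incr k; rewrite leq_eqVlt => /orP[/eqP stat_k | lt_k]; first by left; exists k.
by right; apply: leq_trans lt_k.
Qed.

Section DegreeRecurrence.
Variables oi ii ot it : nat.

Definition deg_step (d : nat * nat) : nat * nat :=
  (d.1 * oi + d.2 * ot, d.1 * ii + d.2 * it).

Definition deg_after (n : nat) (d : nat * nat) : nat :=
  (iter n deg_step d).1 + (iter n deg_step d).2.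

Lemma deg_after_succ n d : deg_after n.+1 d = deg_after n (deg_step d).
Proof. by rewrite /deg_after !iterSr. Qed.

Lemma deg_after_linear n x y :
  deg_after n (x, y) = x * deg_after n (1, 0) + y * deg_after n (0, 1).
Proof.
elim: n x y => [|n IH] x y; first by rewrite /deg_after /=; lia.
rewrite !deg_after_succ /deg_step /= (IH (x * oi + _)) (IH (1 * oi + _)) (IH (0 * oi + _)).
lia.
Qed.

Hypothesis init_deg_gt0 : 0 < oi + ii.
Hypothesis term_deg_gt0 : 0 < ot + it.

Lemma deg_after_nondecreasing n d : deg_after n d <= deg_after n.+1 d.
Proof. by rewrite /deg_after iterS; case: (iter n deg_step d) => x y /=; nia. Qed.

Lemma bounded_fixed_weights B :
  (forall n, deg_after n (1, 0) <= B) -> (forall n, deg_after n (0, 1) <= B) ->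
  exists ps pt, [/\ 0 < ps, 0 < pt, ps = oi * ps + ii * pt & pt = ot * ps + it * pt].
Proof.
move=> le_B_init le_B_term.
have [N stat] := @nondecreasing_bounded_stationary
  (fun n => deg_after n (1, 0) + deg_after n (0, 1)) (B + B)
  (fun n => leq_add (deg_after_nondecreasing n _) (deg_after_nondecreasing n _))
  (fun n => leq_add (le_B_init n) (le_B_term n)).
have mono d : {homo deg_after^~ d : m n / m <= n}.
  exact: homo_leq leqnn leq_trans (fun n => deg_after_nondecreasing n d).
have succ_init : deg_after N.+1 (1, 0) = oi * deg_after N (1, 0) + ii * deg_after N (0, 1).
  by rewrite deg_after_succ /deg_step deg_after_linear /=; nia.
have succ_term : deg_after N.+1 (0, 1) = ot * deg_after N (1, 0) + it * deg_after N (0, 1).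
  by rewrite deg_after_succ /deg_step deg_after_linear /=; nia.
have pos_init : 0 < deg_after N (1, 0) := mono (1, 0) 0 N (leq0n N).
have pos_term : 0 < deg_after N (0, 1) := mono (0, 1) 0 N (leq0n N).
have := mono (1, 0) _ _ (leqnSn N); have := mono (0, 1) _ _ (leqnSn N).
rewrite succ_init succ_term in stat *.
by exists (deg_after N (1, 0)), (deg_after N (0, 1)); split; lia.
Qed.

End DegreeRecurrence.

Fixpoint old_vertex (RS : repl_system) (v0 : gV (rs_G0 RS)) (n : nat) :
    gV (full_expansion RS n) :=
  match n return gV (full_expansion RS n) with
  | 0 => v0
  | n'.+1 => (inl (old_vertex v0 n') : full_V RS (full_expansion RS n'))
  end.

Section OldVertices.
Variable RS : repl_system.
Hypothesis init_neq_term : rs_init RS != rs_term RS.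
Local Notation oi := (outdeg (rs_init RS)).
Local Notation ii := (indeg (rs_init RS)).
Local Notation ot := (outdeg (rs_term RS)).
Local Notation it := (indeg (rs_term RS)).

Lemma enddeg_old_vertex (v0 : gV (rs_G0 RS)) n :
  (outdeg (old_vertex v0 n), indeg (old_vertex v0 n))
  = iter n (deg_step oi ii ot it) (outdeg v0, indeg v0).
Proof. by elim: n => [//|n /= <-]; rewrite !enddeg_full_old. Qed.

Lemma degree_old_vertex (v0 : gV (rs_G0 RS)) n :
  degree (old_vertex v0 n) = deg_after oi ii ot it n (outdeg v0, indeg v0).
Proof. by rewrite degreeE /deg_after -enddeg_old_vertex. Qed.

End OldVertices.

Lemma finite_branching_fixed_weights RS :
  rs_init RS != rs_term RS -> no_isolated_vertices (rs_R RS) -> finite_branching RS ->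
  gE (rs_G0 RS) ->
  exists ps pt, [/\ 0 < ps, 0 < pt,
    ps = outdeg (rs_init RS) * ps + indeg (rs_init RS) * pt &
    pt = outdeg (rs_term RS) * ps + indeg (rs_term RS) * pt].
Proof.
move=> init_neq_term R_noiso [d deg_le_d] eps0.
pose w := deg_after (outdeg (rs_init RS)) (indeg (rs_init RS))
                    (outdeg (rs_term RS)) (indeg (rs_term RS)).
have old_le (v0 : gV (rs_G0 RS)) n :
    outdeg v0 * w n (1, 0) + indeg v0 * w n (0, 1) <= d.
  by rewrite /w -deg_after_linear -(degree_old_vertex init_neq_term).
apply: (bounded_fixed_weights (incident_degree_gt0 (R_noiso _))
          (incident_degree_gt0 (R_noiso _)) (B := d)) => n.
- apply: leq_trans (old_le (gsrc eps0) n); apply: leq_trans (leq_addr _ _).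
  exact: leq_pmull (enddeg_gt0 true eps0).
- apply: leq_trans (old_le (gtgt eps0) n); apply: leq_trans (leq_addl _ _).
  exact: leq_pmull (enddeg_gt0 false eps0).
Qed.

Lemma edgeless_family_empty RS G :
  no_isolated_vertices (rs_G0 RS) -> (gE (rs_G0 RS) -> False) ->
  in_family RS G -> gV G -> False.
Proof.
move=> G0_noiso no_edge [G' [H [GG' G0H iso]]] v.
have H_G0 := expansion_edgeless no_edge G0H; subst H.
have [v'] := expansion_inhabited GG' v.
by case: iso => fv _; have [f _] := G0_noiso (fv v'); case: (no_edge f).
Qed.

Lemma family_degree_bound RS :
  rs_init RS != rs_term RS -> expanding RS -> finite_branching RS ->
  exists D, forall G, in_family RS G -> forall v : gV G, degree v <= D.
Proof.
move=> init_neq_term [G0_noiso R_noiso _ _ _] R_fb.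
case: (pickP (fun _ : gE (rs_G0 RS) => true)) => [eps0 _ | edgeless]; last first.
  exists 0 => G famG v; case: (edgeless_family_empty G0_noiso _ famG v) => f.
  by have := edgeless f.
have [ps [pt [ps_gt0 pt_gt0 fixed_init fixed_term]]] :=
  finite_branching_fixed_weights init_neq_term R_noiso R_fb eps0.
exists (\sum_(v : gV (rs_G0 RS)) potential ps pt v + \sum_(x : gV (rs_R RS)) potential ps pt x).
move=> G famG v.
apply: leq_trans (family_potential_le init_neq_term fixed_init fixed_term famG v).
by rewrite degreeE /potential; nia.
Qed.

Section EdgeBalls.
Variable G : graph.

Definition edges_at (v : gV G) : {set gE G} := [set f | (gsrc f == v) || (gtgt f == v)].

Definition edge_nbhd (h : gE G) : {set gE G} := edges_at (gsrc h) :|: edges_at (gtgt h).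

Definition edge_ball (k : nat) (Y : {set gE G}) : {set gE G} :=
  iter k (fun Z : {set gE G} => \bigcup_(h in Z) edge_nbhd h) Y.

Lemma mem_edge_nbhd h : h \in edge_nbhd h.
Proof. by rewrite !inE !eqxx. Qed.

Lemma edge_ballS k Y h h' :
  h \in edge_ball k Y -> h' \in edge_nbhd h -> h' \in edge_ball k.+1 Y.
Proof. by move=> h_k h'_h; apply/bigcupP; exists h. Qed.

Lemma edge_ball_mono Y : {homo edge_ball^~ Y : k m / k <= m >-> k \subset m}.
Proof.
apply: homo_leq => [A | B A C | k]; [exact: subxx | exact: subset_trans |].
by apply/subsetP => h h_k; apply: edge_ballS h_k (mem_edge_nbhd h).
Qed.

Lemma adjacent_edges_at (x y : gV G) : adjacent x y ->
  exists2 f, f \in edges_at x & f \in edges_at y.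
Proof. by case/existsP=> f /orP[] /andP[fx fy]; exists f; rewrite inE ?fx ?fy ?orbT. Qed.

Variable D : nat.
Hypothesis degree_le : forall v : gV G, degree v <= D.

Lemma card_edges_at v : #|edges_at v| <= D.
Proof.
have -> : edges_at v = [set f | gsrc f == v] :|: [set f | gtgt f == v].
  by apply/setP => f; rewrite !inE.
exact: leq_trans (leq_card_setU _ _) (degree_le v).
Qed.

Lemma card_edge_nbhd h : #|edge_nbhd h| <= 2 * D.
Proof.
rewrite mul2n -addnn; apply: leq_trans (leq_card_setU _ _) (leq_add _ _);
  exact: card_edges_at.
Qed.

Lemma card_edge_ball k Y : #|edge_ball k Y| <= #|Y| * (2 * D) ^ k.
Proof.
elim: k => [|k IH]; first by rewrite muln1.
rewrite /edge_ball iterS -/(edge_ball k Y).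
apply: leq_trans (card_bigcup_le _ _) _.
apply: leq_trans (_ : _ <= \sum_(h in edge_ball k Y) 2 * D) _.
  by apply: leq_sum => h _; apply: card_edge_nbhd.
rewrite sum_nat_const; apply: leq_trans (leq_mul IH (leqnn (2 * D))) _.
by rewrite expnSr -mulnA.
Qed.

End EdgeBalls.

Section ConnectedImage.
Variables (RS : repl_system) (G : graph).
Local Notation R := (rs_R RS).
Variables (gv : gV R -> gV G) (ge : gE R -> gE G).
Hypothesis ge_src : forall r, gsrc (ge r) = gv (gsrc r).
Hypothesis ge_tgt : forall r, gtgt (ge r) = gv (gtgt r).

Lemma image_edges_at (x : gV R) r r' :
  r \in edges_at x -> r' \in edges_at x -> ge r' \in edge_nbhd (ge r).
Proof.
rewrite !inE !ge_src !ge_tgt.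
by case/orP=> /eqP -> /orP[] /eqP ->; rewrite eqxx ?orbT.
Qed.

Hypothesis R_connected : connected_graph R.

Lemma connected_image_in_edge_ball (Y : {set gE G}) r0 r :
  ge r0 \in Y -> ge r \in edge_ball #|gV R| Y.
Proof.
move=> r0_Y.
pose near k x := forall r', r' \in edges_at x -> ge r' \in edge_ball k Y.
have near_src : near 1 (gsrc r0).
  move=> r' r'_at; apply: (@edge_ballS _ 0 _ (ge r0)) r0_Y _.
  by apply: image_edges_at r'_at; rewrite !inE eqxx.
have near_path (p : seq (gV R)) x k :
    path (@adjacent R) x p -> near k x -> near (k + size p) (last x p).
  elim: p x k => [|y p IH] x k /=; first by rewrite addn0.
  case/andP=> /adjacent_edges_at[f fx fy] p_path near_x.
  rewrite addnS -addSn; apply: IH p_path _ => r' r'_y.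
  exact: edge_ballS (near_x f fx) (image_edges_at fy r'_y).
have /connectP[p p_path p_last] := R_connected (gsrc r0) (gsrc r).
case: (shortenP p_path) p_last => q q_path q_uniq _ q_last.
have size_q : 1 + size q <= #|gV R|.
  by have := max_card (mem (gsrc r0 :: q)); rewrite (card_uniqP q_uniq).
apply: subsetP (edge_ball_mono Y size_q) _ _.
by apply: near_path q_path near_src _ _; rewrite -q_last !inE eqxx.
Qed.

End ConnectedImage.

Lemma collapsible_image RS G (T : subgraph G) : collapsible RS T ->
  exists (gv : gV (rs_R RS) -> gV G) (ge : gE (rs_R RS) -> gE G),
    [/\ forall r, gsrc (ge r) = gv (gsrc r), forall r, gtgt (ge r) = gv (gtgt r),
        T.1 = [set gv x | x : gV (rs_R RS)] & T.2 = [set ge r | r : gE (rs_R RS)]].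
Proof.
case=> [[fv [fe [[_ _ src_fe tgt_fe ->] _]]] | [fv [fe [[_ _ src_fe tgt_fe ->] _]]]].
  by exists fv, fe.
exists (fun x => fv (rloop_vmap x)), fe; split => //=.
apply/setP => v; apply/imsetP/imsetP => [[y _ ->] | [x _ ->]]; last by exists (rloop_vmap x).
case: y => [s|]; first by exists (val s); rewrite // /rloop_vmap valK.
by exists (rs_init RS); rewrite // /rloop_vmap insubN // /interiorb eqxx.
Qed.

Definition endpoints (G : graph) (E : {set gE G}) : {set gV G} :=
  [set v | [exists h in E, h \in edges_at v]].

Lemma collapsible_vertices RS G (T : subgraph G) :
  no_isolated_vertices (rs_R RS) -> collapsible RS T -> T.1 = endpoints T.2.
Proof.
move=> R_noiso /collapsible_image[gv [ge [src_ge tgt_ge -> ->]]].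
apply/setP => v; rewrite inE; apply/imsetP/existsP => [[x _ ->] | [h]].
  have [f [f_x | f_x]] := R_noiso x; exists (ge f);
    by rewrite imset_f // inE ?src_ge ?tgt_ge f_x eqxx ?orbT.
case/andP=> /imsetP[r _ ->]; rewrite inE src_ge tgt_ge => /orP[] /eqP <-.
  by exists (gsrc r).
by exists (gtgt r).
Qed.

Lemma collapsible_eq RS G (T T' : subgraph G) : no_isolated_vertices (rs_R RS) ->
  collapsible RS T -> collapsible RS T' -> T.2 = T'.2 -> T = T'.
Proof.
move=> R_noiso T_coll T'_coll eq_edges.
rewrite [T]surjective_pairing [T']surjective_pairing.
rewrite (collapsible_vertices R_noiso T_coll) (collapsible_vertices R_noiso T'_coll).
by rewrite eq_edges.
Qed.

Lemma collapsible_sub_edge_ball RS G (T : subgraph G) (Y : {set gE G}) :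
  connected_graph (rs_R RS) -> collapsible RS T -> (exists f, f \in Y /\ f \in T.2) ->
  T.2 \subset edge_ball #|gV (rs_R RS)| Y.
Proof.
move=> R_connected /collapsible_image[gv [ge [src_ge tgt_ge _ ->]]].
case=> f [f_Y /imsetP[r0 _ f_r0]].
apply/subsetP => _ /imsetP[r _ ->].
by apply: (connected_image_in_edge_ball src_ge tgt_ge R_connected (r0 := r0)); rewrite -f_r0.
Qed.

Lemma uniq_size_le_powerset (T : eqType) (U : finType) (s : seq T) (g : T -> {set U})
    (C : {set U}) :
  uniq s -> {in s &, injective g} -> (forall x, x \in s -> g x \subset C) ->
  size s <= 2 ^ #|C|.
Proof.
move=> s_uniq g_inj g_sub; rewrite -card_powerset -(size_map g).
rewrite -(card_uniqP _); last by rewrite map_inj_in_uniq.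
by apply/subset_leq_card/subsetP => _ /mapP[x x_s ->]; rewrite powersetE g_sub.
Qed.

Theorem lemma4p13 (RS : repl_system) :
  rs_init RS != rs_term RS ->
  expanding RS ->
  finite_branching RS ->
  connected_graph (rs_R RS) ->
  exists i : nat,
    forall G : graph, in_family RS G ->
    forall S : subgraph G, collapsible RS S ->
    forall s : seq (subgraph G),
      uniq s ->
      (forall T, T \in s ->
         [/\ collapsible RS T, T <> S &
             exists f : gE G, f \in S.2 /\ f \in T.2]) ->
      size s <= i.
Proof.
move=> init_neq_term R_exp R_fb R_connected.
have [D deg_le] := family_degree_bound init_neq_term R_exp R_fb.
have [_ R_noiso _ _ _] := R_exp.
exists (2 ^ (#|gE (rs_R RS)| * (2 * D) ^ #|gV (rs_R RS)|)).
move=> G famG S S_coll s s_uniq s_meet.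
have [_ [ge [_ _ _ S_edges]]] := collapsible_image S_coll.
apply: (leq_trans (uniq_size_le_powerset (g := snd)
                     (C := edge_ball #|gV (rs_R RS)| S.2) s_uniq _ _)).
- by move=> T T' /s_meet[T_coll _ _] /s_meet[T'_coll _ _]; apply: collapsible_eq.
- move=> T /s_meet[T_coll _ [f [f_S f_T]]].
  by apply: collapsible_sub_edge_ball R_connected T_coll _; exists f.
rewrite leq_exp2l //; apply: leq_trans (card_edge_ball (deg_le G famG) _ _) _.
by rewrite leq_mul2r S_edges (leq_trans (leq_imset_card _ _) (max_card _)) orbT.
Qed.
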